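(* Let $E$ be a directed graph, let $V\subset E^0$, let $R$ be a commutative ring with identity, and let $\{p_v,s_e,s_{e^*}\}$ be the universal generating Leavitt $E$-family in $L_R(E)$. Let $M=\operatorname{span}_R\{s_\mu s_{\nu^*}:\mu,\nu\in E^*,\ r(\mu)\in V\}$ and $M^*=\operatorname{span}_R\{s_\mu s_{\nu^*}:\mu,\nu\in E^*,\ r(\nu)\in V\}$, and let $M^*M$ be the $R$-span of all products $nm$ with $n\in M^*$, $m\in M$. Then $M^*M=L_R(E)$ (i.e. $V$ is full) if and only if $\Sigma H(V)=E^0$.
   Context: A directed graph $E=(E^0,E^1,r,s)$ has countable vertex and edge sets with range and source maps $r,s:E^1\to E^0$. A vertex $v$ is singular if $r^{-1}(v)$ is empty or infinite. Finite paths $\mu=\mu_1\cdots\mu_n$ satisfy $s(\mu_i)=r(\mu_{i+1})$, with $r(\mu)=r(\mu_1)$, $s(\mu)=s(\mu_n)$; vertices are paths of length $0$; $E^*$ is the set of finite paths. $L_R(E)$ is the universal $R$-algebra generated by mutually orthogonal idempotents $p_v$ ($v\in E^0$) and elements $s_e,s_{e^*}$ ($e\in E^1$) subject to $p_{r(e)}s_e=s_e=s_ep_{s(e)}$, $p_{s(e)}s_{e^*}=s_{e^*}=s_{e^*}p_{r(e)}$, $s_{e^*}s_f=\delta_{e,f}p_{s(e)}$, and $p_v=\sum_{r(e)=v}s_es_{e^*}$ for non-singular $v$; $s_\mu=s_{\mu_1}\cdots s_{\mu_n}$, $s_{\mu^*}=s_{\mu_n^*}\cdots s_{\mu_1^*}$,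 $s_v=s_{v^*}=p_v$. Write $v\le w$ if there is $\mu\in E^*$ with $r(\mu)=v$, $s(\mu)=w$. A set $H\subset E^0$ is hereditary if $v\in H$, $v\le w$ imply $w\in H$; it is saturated if whenever $0<|r^{-1}(v)|<\infty$ and $s(r^{-1}(v))\subset H$ then $v\in H$. $\Sigma H(V)$ denotes the smallest saturated hereditary subset of $E^0$ containing $V$. *)

From HB Require Import structures.
From mathcomp Require Import all_boot all_order all_algebra.
Set Implicit Arguments. Unset Strict Implicit. Unset Printing Implicit Defensive.
Import GRing.Theory.
Local Open Scope ring_scope.

Section Graph.
Variables (V0 E1 : countType) (r s : E1 -> V0).

(* A finite path is a pair (v, es): if es = [::] it is the vertex v (length 0);
   otherwise es = mu_1 ... mu_n with r mu_1 = v and s mu_i = r mu_(i+1). *)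
Definition gpath := (V0 * seq E1)%type.

Definition valid_path (mu : gpath) : bool :=
  match mu.2 with
  | [::] => true
  | e :: es => (r e == mu.1) && path (fun e f => s e == r f) e es
  end.

Definition prange (mu : gpath) : V0 := mu.1.
Definition psource (mu : gpath) : V0 :=
  match mu.2 with [::] => mu.1 | e :: es => s (last e es) end.

Definition gle (v w : V0) : Prop :=
  exists mu, [/\ valid_path mu, prange mu = v & psource mu = w].

Definition enum_range (v : V0) (l : seq E1) : Prop :=
  uniq l /\ forall e, r e = v <-> e \in l.
Definition regular (v : V0) : Prop :=
  exists l, l != [::] /\ enum_range v l.

Definition hereditary (H : V0 -> Prop) : Prop :=
  forall v w, H v -> gle v w -> H w.
Definition saturated (H : V0 -> Prop) : Prop :=
  forall v, regular v -> (forall e, r e = v -> H (s e)) -> H v.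

Definition SigmaH (V : V0 -> Prop) (w : V0) : Prop :=
  forall H, hereditary H -> saturated H -> (forall v, V v -> H v) -> H w.

End Graph.

Definition is_nalg (R : comNzRingType) (A : lmodType R) (mul : A -> A -> A) : Prop :=
  [/\ forall x y z, mul x (mul y z) = mul (mul x y) z,
      forall (a : R) x y z, mul (a *: x + y) z = a *: mul x z + mul y z
    & forall (a : R) x y z, mul z (a *: x + y) = a *: mul z x + mul z y].

Definition is_nalg_hom (R : comNzRingType) (A B : lmodType R)
  (mulA : A -> A -> A) (mulB : B -> B -> B) (phi : A -> B) : Prop :=
  (forall (a : R) x y, phi (a *: x + y) = a *: phi x + phi y) /\
  (forall x y, phi (mulA x y) = mulB (phi x) (phi y)).

Section Leavitt.
Variables (V0 E1 : countType) (r s : E1 -> V0).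
Variables (R : comNzRingType) (A : lmodType R) (mul : A -> A -> A).
Variables (p : V0 -> A) (se sse : E1 -> A).

Definition leavitt_family : Prop :=
  [/\ (forall v, mul (p v) (p v) = p v) /\
      (forall v w, v != w -> mul (p v) (p w) = 0),
      forall e, mul (p (r e)) (se e) = se e /\ mul (se e) (p (s e)) = se e,
      forall e, mul (p (s e)) (sse e) = sse e /\ mul (sse e) (p (r e)) = sse e,
      forall e f, mul (sse e) (se f) = if e == f then p (s e) else 0
    & forall v l, l != [::] -> enum_range r v l ->
        p v = \sum_(e <- l) mul (se e) (sse e)].

Definition wprod (x : A) (xs : seq A) : A := foldl mul x xs.

Definition spath (mu : gpath V0 E1) : A :=
  match mu.2 with [::] => p mu.1 | e :: es => wprod (se e) (map se es) end.
Definition spath_star (mu : gpath V0 E1) : A :=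
  match rev mu.2 with [::] => p mu.1 | e :: es => wprod (sse e) (map sse es) end.

End Leavitt.

(* (A, mul, p, se, sse) is the universal Leavitt E-family, i.e. A = L_R(E). *)
Definition universal_leavitt (V0 E1 : countType) (r s : E1 -> V0)
  (R : comNzRingType) (A : lmodType R) (mul : A -> A -> A)
  (p : V0 -> A) (se sse : E1 -> A) : Prop :=
  is_nalg mul /\ leavitt_family r s mul p se sse /\
  forall (B : lmodType R) (mulB : B -> B -> B) (q : V0 -> B) (te tse : E1 -> B),
    is_nalg mulB -> leavitt_family r s mulB q te tse ->
    (exists phi : A -> B, is_nalg_hom mul mulB phi /\
       (forall v, phi (p v) = q v) /\ (forall e, phi (se e) = te e) /\
       (forall e, phi (sse e) = tse e)) /\
    (forall phi1 phi2 : A -> B,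
       is_nalg_hom mul mulB phi1 -> is_nalg_hom mul mulB phi2 ->
       (forall v, phi1 (p v) = q v) -> (forall e, phi1 (se e) = te e) ->
       (forall e, phi1 (sse e) = tse e) ->
       (forall v, phi2 (p v) = q v) -> (forall e, phi2 (se e) = te e) ->
       (forall e, phi2 (sse e) = tse e) -> forall x, phi1 x = phi2 x).

Definition rspan (R : comNzRingType) (A : lmodType R) (P : A -> Prop) (a : A) : Prop :=
  exists (n : nat) (c : 'I_n -> R) (x : 'I_n -> A),
    (forall i, P (x i)) /\ a = \sum_(i < n) c i *: x i.

From HB Require Import structures.
From mathcomp Require Import all_boot all_order all_algebra.
From mathcomp Require Import boolp functions.
Import GRing.Theory.
Local Open Scope ring_scope.
Set Implicit Arguments. Unset Strict Implicit. Unset Printing Implicit Defensive.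

(* If Sigma H(V) = E^0: the span M^*M is a two-sided ideal, since it is spanned
   by products of monomials s_mu s_nu^* and a generator multiplies a monomial
   into 0 or into a monomial with the same outer vertex.  The vertices v with
   p_v in M^*M therefore form a saturated hereditary set containing V, so every
   p_v, and then every generator, lies in M^*M.
   Conversely, if H is saturated hereditary, contains V and misses w, a
   representation of L_R(E) on R-valued functions on the paths avoiding H
   kills each p_v with v in H, hence all of M (whose monomials start with such
   a p_v) and M^*M, but not p_w. *)


Section LinComb.
Variables (R : comNzRingType) (A : lmodType R).

Inductive lincomb (P : A -> Prop) : A -> Prop :=
| lincomb0 : lincomb P 0
| lincomb_cons c y z : P y -> lincomb P z -> lincomb P (c *: y + z).

Lemma rspanP P x : rspan P x <-> lincomb P x.
Proof.
split.
- case=> n [c [xs [Pxs ->]]]; elim: n c xs Pxs => [|n IHn] c xs Pxs.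
    by rewrite big_ord0; constructor.
  by rewrite big_ord_recl; apply: lincomb_cons; [exact: Pxs | exact: IHn].
- elim=> [|c y z Py _ [n [cs [xs [Pxs ->]]]]].
    by exists 0%N, (fun _ => 0), (fun _ => 0); split=> [[]|]; rewrite ?big_ord0.
  exists n.+1, (fun i => if unlift ord0 i is Some j then cs j else c),
               (fun i => if unlift ord0 i is Some j then xs j else y).
  split=> [i|]; first by case: (unlift ord0 i).
  rewrite big_ord_recl unlift_none; congr (_ + _).
  by apply: eq_bigr => i _; rewrite liftK.
Qed.

Lemma lincomb1 P x : P x -> lincomb P x.
Proof.
by move=> Px; rewrite -[x]scale1r -[_ *: x]addr0; apply: lincomb_cons => //; constructor.
Qed.

Lemma lincombZD P a x y : lincomb P x -> lincomb P y -> lincomb P (a *: x + y).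
Proof.
move=> Px Py; elim: Px => [|c u z Pu _ IH]; first by rewrite scaler0 add0r.
by rewrite scalerDr scalerA -addrA; apply: lincomb_cons.
Qed.

Lemma lincombD P x y : lincomb P x -> lincomb P y -> lincomb P (x + y).
Proof. by move=> Px Py; rewrite -[x]scale1r; apply: lincombZD. Qed.

Lemma lincomb_sum P (I : eqType) (l : seq I) (F : I -> A) :
  (forall i, i \in l -> lincomb P (F i)) -> lincomb P (\sum_(i <- l) F i).
Proof.
elim: l => [|i l IHl] PF; first by rewrite big_nil; constructor.
rewrite big_cons; apply: lincombD; first by apply: PF; rewrite inE eqxx.
by apply: IHl => j jl; apply: PF; rewrite inE jl orbT.
Qed.

End LinComb.

Section LinearLinComb.
Variables (R : comNzRingType) (A B : lmodType R) (f : A -> B).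
Hypothesis f_lin : linear f.

Lemma linear_map0 : f 0 = 0.
Proof.
have := f_lin 1 0 0; rewrite !scale1r !addr0 => f0.
by apply: (@addrI _ (f 0)); rewrite addr0 -f0.
Qed.

Lemma lincomb_linear (P : A -> Prop) (Q : B -> Prop) :
  (forall y, P y -> lincomb Q (f y)) -> forall x, lincomb P x -> lincomb Q (f x).
Proof.
move=> PQ x; elim=> [|c y z Py _ IH]; first by rewrite linear_map0; constructor.
by rewrite f_lin; apply: lincombZD => //; apply: PQ.
Qed.

Lemma lincomb_linear_eq0 (P : A -> Prop) :
  (forall y, P y -> f y = 0) -> forall x, lincomb P x -> f x = 0.
Proof.
move=> Pf0 x; elim=> [|c y z Py _ IH]; first exact: linear_map0.
by rewrite f_lin IH Pf0 // scaler0 addr0.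
Qed.

End LinearLinComb.

Section NAlgebra.
Variables (R : comNzRingType) (A : lmodType R) (mul : A -> A -> A).
Hypothesis mul_nalg : is_nalg mul.

Lemma nalg_mulA x y z : mul x (mul y z) = mul (mul x y) z.
Proof. by case: mul_nalg. Qed.

Lemma linear_lmul z : linear (mul z).
Proof. by case: mul_nalg => _ _ + a x y; apply. Qed.

Lemma linear_rmul z : linear (mul^~ z).
Proof. by case: mul_nalg => _ + _ a x y; apply. Qed.

Lemma nalg_mul0r z : mul z 0 = 0.
Proof. exact: linear_map0 (linear_lmul z). Qed.

Lemma nalg_mul0l z : mul 0 z = 0.
Proof. exact: linear_map0 (linear_rmul z). Qed.

Lemma nalg_foldl_mul x y ys : foldl mul (mul x y) ys = mul x (foldl mul y ys).
Proof. by elim: ys y => [|z zs IHzs] y //=; rewrite -nalg_mulA IHzs. Qed.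

End NAlgebra.

Section Paths.
Variables (V0 E1 : countType) (r s : E1 -> V0).
Local Notation valid := (valid_path r s).

Lemma valid_path_cons u e es : valid (u, e :: es) = (r e == u) && valid (s e, es).
Proof. by rewrite /valid_path /=; case: es => //= f fs; rewrite [s e == _]eq_sym. Qed.

Lemma psource_cons u e es : psource s (u, e :: es) = psource s (s e, es).
Proof. by rewrite /psource; case: es. Qed.

Lemma valid_path_rcons u es f :
  valid (u, es) -> psource s (u, es) = r f -> valid (u, rcons es f).
Proof.
elim: es u => [|e es IHes] u.
  by move=> _; rewrite /psource /= => ->; rewrite /valid_path /= eqxx.
rewrite /= !valid_path_cons psource_cons => /andP[-> ?] ?.
exact: IHes.
Qed.

Lemma gle_path mu : valid mu -> gle r s (prange mu) (psource s mu).
Proof. by exists mu. Qed.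

Lemma edge_closed_hereditary (P : V0 -> Prop) :
  (forall e, P (r e) -> P (s e)) -> hereditary r s P.
Proof.
move=> Pedge v w Pv [[u es] [mu_v /= uv <-]]; subst v.
elim: es u mu_v Pv => [|e es IHes] u //=.
rewrite valid_path_cons psource_cons => /andP[/eqP <- ?] ?.
by apply: IHes => //; apply: Pedge.
Qed.

End Paths.

Definition lincomb_closed (R : pzRingType) (W : lmodType R) (P : W -> Prop) : Prop :=
  P 0 /\ forall a u v, P u -> P v -> P (a *: u + v).

Section SubLmodule.
Variables (R : pzRingType) (W : lmodType R) (P : W -> Prop).

Definition sub_lmod (P_closed : lincomb_closed P) := {x : W | `[< P x >]}.

Variable P_closed : lincomb_closed P.

HB.instance Definition _ := SubType.copy (sub_lmod P_closed) {x : W | `[< P x >]}.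
HB.instance Definition _ := [Choice of sub_lmod P_closed by <:].

Lemma lincomb_closed_subproof : subsemimod_closed (fun x => `[< P x >]).
Proof.
case: P_closed => P0 PZD; split; first split.
- exact/asboolP.
- move=> u v /asboolP Pu /asboolP Pv; apply/asboolP.
  by have := PZD 1 u v Pu Pv; rewrite scale1r.
- move=> a u /asboolP Pu; apply/asboolP.
  by have := PZD a u 0 Pu P0; rewrite addr0.
Qed.

HB.instance Definition _ :=
  GRing.SubChoice_isSubLmodule.Build R W _ (sub_lmod P_closed) lincomb_closed_subproof.

Definition insub_lmod x (Px : P x) : sub_lmod P_closed := exist _ x (asboolT Px).

Lemma sub_lmodP (x : sub_lmod P_closed) : P (val x).
Proof. exact: (asboolP _ (valP x)). Qed.

End SubLmodule.

Section EndoAlgebra.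
Variables (R : comNzRingType) (W : lmodType R).

Lemma linear_fun_closed : lincomb_closed (fun T : W -> W => linear T).
Proof.
split=> [a f g|a T U T_lin U_lin b f g].
  by rewrite [0 _]/= scaler0 addr0.
have aTU_E h : (a *: T + U) h = a *: T h + U h by [].
rewrite !aTU_E T_lin U_lin !scalerDr !scalerA [a * b]mulrC.
by rewrite -!addrA; congr (_ + _); rewrite addrCA.
Qed.

Definition endo := sub_lmod linear_fun_closed.

Lemma linear_comp (T U : W -> W) : linear T -> linear U -> linear (fun f => T (U f)).
Proof. by move=> T_lin U_lin a f g; rewrite U_lin T_lin. Qed.

Lemma endoP (x : endo) : linear (val x).
Proof. exact: sub_lmodP. Qed.

Definition endo_comp (x y : endo) : endo :=
  insub_lmod linear_fun_closed (linear_comp (endoP x) (endoP y)).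

Lemma endo_comp_nalg : is_nalg endo_comp.
Proof.
split=> [x y z|a x y z|a x y z]; apply: val_inj; rewrite /= ?fctE //.
by apply: funext => f /=; rewrite (endoP z).
Qed.

End EndoAlgebra.

Section PullbackOperators.
Variables (R : comNzRingType) (X : eqType).
Local Notation F := (X -> R^o).

Definition pullback (t : X -> option X) (f : F) : F :=
  fun x => if t x is Some y then f y else 0.

Lemma pullback_linear t : linear (pullback t).
Proof.
move=> a f g; apply: funext => x.
rewrite [RHS](_ : _ = a *: pullback t f x + pullback t g x) // /pullback.
by case: (t x) => [y|] //; rewrite scaler0 addr0.
Qed.

Definition pull_op t : endo F := insub_lmod (linear_fun_closed F) (pullback_linear t).

Lemma pull_op_comp t u :
  endo_comp (pull_op t) (pull_op u) = pull_op (fun x => obind u (t x)).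
Proof.
apply: val_inj; apply: funext => f; apply: funext => x.
by rewrite /= /pullback; case: (t x).
Qed.

Lemma eq_pull_op t u : t =1 u -> pull_op t = pull_op u.
Proof.
by move=> tu; apply: val_inj; apply: funext => f; apply: funext => x; rewrite /= /pullback tu.
Qed.

Lemma pull_op_eq0 t : pull_op t = 0 <-> t =1 (fun _ => None).
Proof.
split=> [t0 x|t0]; last by rewrite (eq_pull_op t0); apply: val_inj.
case tx: (t x) => [y|] //.
move/(congr1 (fun T : endo F => val T (fun z => (z == y)%:R) x)): t0.
by rewrite /= /pullback tx eqxx => /eqP; rewrite oner_eq0.
Qed.

Lemma sum_pull_op_select (I : eqType) (l : seq I) (sel : X -> option I)
    (u : X -> option X) :
    uniq l -> (forall x, u x != None -> exists2 i, i \in l & sel x = Some i) ->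
  \sum_(i <- l) pull_op (fun x => if sel x == Some i then u x else None) = pull_op u.
Proof.
move=> l_uniq sel_l; apply: val_inj; apply: funext => f; apply: funext => x.
rewrite raddf_sum !fct_sumE /= /pullback.
case ux: (u x) => [y|]; last by rewrite big1 // => i _; case: ifP.
have [|i il sel_i] := sel_l x; first by rewrite ux.
rewrite (bigD1_seq i) //= sel_i eqxx big1 ?addr0 // => j /negPf ji.
by rewrite (inj_eq Some_inj) eq_sym ji.
Qed.

End PullbackOperators.

Section LeavittFamily.
Variables (V0 E1 : countType) (r s : E1 -> V0).
Variables (R : comNzRingType) (A : lmodType R) (mul : A -> A -> A).
Variables (p : V0 -> A) (se sse : E1 -> A).
Hypotheses (mul_nalg : is_nalg mul) (fam : leavitt_family r s mul p se sse).
Local Notation valid := (valid_path r s).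
Local Notation spath := (spath mul p se).
Local Notation spath_star := (spath_star mul p sse).
Local Notation mulA := (nalg_mulA mul_nalg).
Local Notation mul0l := (nalg_mul0l mul_nalg).
Local Notation mul0r := (nalg_mul0r mul_nalg).

Lemma p_idem v : mul (p v) (p v) = p v. Proof. by case: fam => [[]]. Qed.

Lemma p_mul v w : mul (p v) (p w) = if v == w then p v else 0.
Proof.
case: eqP => [->|/eqP neq_vw]; first exact: p_idem.
by case: fam => [[_ p_orth]] *; apply: p_orth.
Qed.

Lemma p_se e : mul (p (r e)) (se e) = se e. Proof. by case: fam => _ /(_ e)[]. Qed.
Lemma se_p e : mul (se e) (p (s e)) = se e. Proof. by case: fam => _ /(_ e)[]. Qed.
Lemma p_sse e : mul (p (s e)) (sse e) = sse e. Proof. by case: fam => _ _ /(_ e)[]. Qed.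
Lemma sse_p e : mul (sse e) (p (r e)) = sse e. Proof. by case: fam => _ _ /(_ e)[]. Qed.

Lemma sse_se e f : mul (sse e) (se f) = if e == f then p (s e) else 0.
Proof. by case: fam. Qed.

Lemma p_sum_se_sse v l :
  l != [::] -> enum_range r v l -> p v = \sum_(e <- l) mul (se e) (sse e).
Proof. by case: fam => _ _ _ _; apply. Qed.

Lemma spath_cons u e es : spath (u, e :: es) = mul (se e) (spath (s e, es)).
Proof.
case: es => [|f es]; first by rewrite /spath /= se_p.
by rewrite /spath /= /wprod /= nalg_foldl_mul.
Qed.

Lemma spath_star_cons u e es :
  spath_star (u, e :: es) = mul (spath_star (s e, es)) (sse e).
Proof.
rewrite /spath_star /= rev_cons.
case: (rev es) => [|g gs] /=; first by rewrite p_sse.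
by rewrite /wprod map_rcons foldl_rcons.
Qed.

Lemma p_spath u es : valid (u, es) -> mul (p u) (spath (u, es)) = spath (u, es).
Proof.
case: es => [|e es]; first by rewrite /spath /= p_idem.
by rewrite valid_path_cons => /andP[/eqP <- _]; rewrite spath_cons mulA p_se.
Qed.

Lemma spath_p mu : valid mu -> mul (spath mu) (p (psource s mu)) = spath mu.
Proof.
case: mu => u es; elim: es u => [|e es IHes] u; first by rewrite /spath /= p_idem.
rewrite valid_path_cons psource_cons => /andP[_ ?].
by rewrite !spath_cons -mulA IHes.
Qed.

Lemma p_spath_star nu :
  valid nu -> mul (p (psource s nu)) (spath_star nu) = spath_star nu.
Proof.
case: nu => u es; elim: es u => [|e es IHes] u; first by rewrite /spath_star /= p_idem.
rewrite valid_path_cons psource_cons => /andP[_ ?].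
by rewrite !spath_star_cons mulA IHes.
Qed.

Lemma spath_star_p u es :
  valid (u, es) -> mul (spath_star (u, es)) (p u) = spath_star (u, es).
Proof.
case: es => [|e es]; first by rewrite /spath_star /= p_idem.
by rewrite valid_path_cons => /andP[/eqP <- _]; rewrite spath_star_cons -mulA sse_p.
Qed.

Lemma spath_rcons u es f : valid (u, es) -> psource s (u, es) = r f ->
  spath (u, rcons es f) = mul (spath (u, es)) (se f).
Proof.
elim: es u => [|e es IHes] u.
  move=> _; rewrite /psource /= => ->.
  by rewrite -/(rcons [::] f) spath_cons /spath /= se_p p_se.
rewrite valid_path_cons psource_cons => /andP[_ ?] ? /=.
by rewrite -/(rcons es f) !spath_cons IHes // mulA.
Qed.

Lemma spath_star_rcons u es f : valid (u, es) -> psource s (u, es) = r f ->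
  spath_star (u, rcons es f) = mul (sse f) (spath_star (u, es)).
Proof.
elim: es u => [|e es IHes] u.
  move=> _; rewrite /psource /= => ->.
  by rewrite -/(rcons [::] f) spath_star_cons /spath_star /= p_sse sse_p.
rewrite valid_path_cons psource_cons => /andP[_ ?] ? /=.
by rewrite -/(rcons es f) !spath_star_cons IHes // mulA.
Qed.

Definition monomial (mu nu : gpath V0 E1) : A := mul (spath mu) (spath_star nu).

Definition monomial_or0_l (u : V0) (x : A) : Prop := x = 0 \/
  exists mu nu, [/\ valid mu, valid nu, prange mu = u & x = monomial mu nu].
Definition monomial_or0_r (u : V0) (x : A) : Prop := x = 0 \/
  exists mu nu, [/\ valid mu, valid nu, prange nu = u & x = monomial mu nu].

Section LeftMultiplication.
Variables (mu nu : gpath V0 E1).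
Hypotheses (mu_valid : valid mu) (nu_valid : valid nu).

Lemma p_monomial v : monomial_or0_r (prange nu) (mul (p v) (monomial mu nu)).
Proof.
case: mu mu_valid => u es mu_v; rewrite /monomial -(p_spath mu_v) !mulA p_mul.
case: eqP => [->|_]; last by rewrite !mul0l; left.
by rewrite (p_spath mu_v); right; exists (u, es), nu.
Qed.

Lemma se_monomial f : monomial_or0_r (prange nu) (mul (se f) (monomial mu nu)).
Proof.
case: mu mu_valid => u es mu_v; rewrite /monomial mulA.
have [sf_u|sf_u] := eqVneq (s f) u.
  right; exists (r f, f :: es), nu; split=> //.
    by rewrite valid_path_cons eqxx sf_u.
  by rewrite /monomial spath_cons sf_u.
rewrite -(p_spath mu_v) mulA -se_p -(mulA (se f)) p_mul (negbTE sf_u) mul0r !mul0l.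
by left.
Qed.

Lemma sse_monomial f : monomial_or0_r (prange nu) (mul (sse f) (monomial mu nu)).
Proof.
case: mu mu_valid => u [|e es] mu_v; rewrite /monomial mulA; last first.
  move: mu_v; rewrite valid_path_cons => /andP[_ ?].
  rewrite spath_cons !mulA sse_se; case: eqP => [->|_]; last by rewrite !mul0l; left.
  by rewrite p_spath //; right; exists (s e, es), nu.
rewrite {1}/spath /= -sse_p -(mulA (sse f)) p_mul.
have [rf_u|] := eqVneq (r f) u; last by rewrite mul0r !mul0l; left.
case: nu nu_valid => x ns nu_v.
rewrite sse_p -(p_spath_star nu_v) mulA -sse_p -(mulA (sse f)) p_mul.
have [rf_src|] := eqVneq (r f) (psource s (x, ns)); last by rewrite mul0r !mul0l; left.
right; exists (s f, [::]), (x, rcons ns f).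
split=> //; first exact: valid_path_rcons nu_v (esym rf_src).
by rewrite sse_p /monomial (spath_star_rcons nu_v (esym rf_src)) /spath /= mulA p_sse.
Qed.

End LeftMultiplication.

Section RightMultiplication.
Variables (mu nu : gpath V0 E1).
Hypotheses (mu_valid : valid mu) (nu_valid : valid nu).

Lemma monomial_p v : monomial_or0_l (prange mu) (mul (monomial mu nu) (p v)).
Proof.
case: nu nu_valid => x ns nu_v; rewrite /monomial -(spath_star_p nu_v) -!mulA p_mul.
case: eqP => [_|_]; last by rewrite !mul0r; left.
by rewrite (spath_star_p nu_v); right; exists mu, (x, ns).
Qed.

Lemma monomial_sse f : monomial_or0_l (prange mu) (mul (monomial mu nu) (sse f)).
Proof.
case: nu nu_valid => x ns nu_v; rewrite /monomial -mulA.
have [x_sf|x_sf] := eqVneq x (s f).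
  right; exists mu, (r f, f :: ns); split=> //.
    by rewrite valid_path_cons eqxx -x_sf.
  by rewrite /monomial spath_star_cons x_sf.
rewrite -(spath_star_p nu_v) -mulA -p_sse (mulA (p x)) p_mul (negbTE x_sf) mul0l !mul0r.
by left.
Qed.

Lemma monomial_se f : monomial_or0_l (prange mu) (mul (monomial mu nu) (se f)).
Proof.
case: nu nu_valid => x [|e ns] nu_v; rewrite /monomial -mulA; last first.
  move: nu_v; rewrite valid_path_cons => /andP[_ ?].
  rewrite spath_star_cons -!mulA sse_se; case: eqP => [_|_]; last by rewrite !mul0r; left.
  by rewrite spath_star_p //; right; exists mu, (s e, ns).
rewrite {1}/spath_star /= -p_se (mulA (p x)) p_mul.
have [x_rf|] := eqVneq x (r f); last by rewrite mul0l !mul0r; left.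
case: mu mu_valid => u ms mu_v.
rewrite x_rf p_se -(spath_p mu_v) -mulA -p_se (mulA (p (psource s (u, ms)))) p_mul.
have [src_rf|] := eqVneq (psource s (u, ms)) (r f); last by rewrite mul0l !mul0r; left.
right; exists (u, rcons ms f), (s f, [::]).
split=> //; first exact: valid_path_rcons mu_v src_rf.
by rewrite src_rf p_se /monomial (spath_rcons mu_v src_rf) /spath_star /= -mulA se_p.
Qed.

End RightMultiplication.

End LeavittFamily.

Section Generated.
Variables (V0 E1 : countType) (r s : E1 -> V0).
Variables (R : comNzRingType) (A : lmodType R) (mul : A -> A -> A).
Variables (p : V0 -> A) (se sse : E1 -> A).
Hypotheses (mul_nalg : is_nalg mul) (fam : leavitt_family r s mul p se sse).

Inductive fam_generated : A -> Prop :=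
| gen_p v : fam_generated (p v)
| gen_se e : fam_generated (se e)
| gen_sse e : fam_generated (sse e)
| gen0 : fam_generated 0
| genZD a x y : fam_generated x -> fam_generated y -> fam_generated (a *: x + y)
| gen_mul x y : fam_generated x -> fam_generated y -> fam_generated (mul x y).

Lemma fam_generated_closed : lincomb_closed fam_generated.
Proof. by split; [exact: gen0 | exact: genZD]. Qed.

Local Notation C := (sub_lmod fam_generated_closed).
Local Notation inC := (insub_lmod fam_generated_closed).

Definition generated_mul (x y : C) : C := inC (gen_mul (sub_lmodP x) (sub_lmodP y)).

Lemma generated_mul_nalg : is_nalg generated_mul.
Proof.
case: mul_nalg => mulA mulZDl mulZDr.
by split=> *; apply: val_inj; rewrite /= ?mulA ?mulZDl ?mulZDr.
Qed.

Lemma generated_family : leavitt_family r s generated_mul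
  (fun v => inC (gen_p v)) (fun e => inC (gen_se e)) (fun e => inC (gen_sse e)).
Proof.
split.
- split=> [v|v w neq_vw]; apply: val_inj; first exact: (p_idem fam).
  by rewrite /= (p_mul fam) (negbTE neq_vw).
- by move=> e; split; apply: val_inj; [exact: (p_se fam) | exact: (se_p fam)].
- by move=> e; split; apply: val_inj; [exact: (p_sse fam) | exact: (sse_p fam)].
- by move=> e f; apply: val_inj; rewrite /= (sse_se fam); case: eqP.
- move=> v l l_nil l_enum; apply: val_inj; rewrite raddf_sum.
  exact: (p_sum_se_sse fam).
Qed.

End Generated.

(* Composing the map into the generated subalgebra with the inclusion fixes the
   generators, hence is the identity by uniqueness. *)
Lemma universal_leavitt_generated (V0 E1 : countType) (r s : E1 -> V0)
    (R : comNzRingType) (A : lmodType R) (mul : A -> A -> A)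
    (p : V0 -> A) (se sse : E1 -> A) :
  universal_leavitt r s mul p se sse -> forall x, fam_generated mul p se sse x.
Proof.
case=> mul_nalg [fam univ] x.
have [[phi [[phi_lin phi_mul] [phi_p [phi_se phi_sse]]]] _] :=
  univ _ _ _ _ _ (generated_mul_nalg p se sse mul_nalg) (generated_family fam).
have [_ uniq] := univ A mul p se sse mul_nalg fam.
have val_phi : val (phi x) = x.
  apply: (uniq (fun x => val (phi x)) id) => // [|v|e|e]; last 3 first.
  - by rewrite phi_p.
  - by rewrite phi_se.
  - by rewrite phi_sse.
  by split=> [a y z|y z]; rewrite ?phi_lin ?phi_mul.
by rewrite -val_phi; apply: sub_lmodP.
Qed.

Section FullIdeal.
Variables (V0 E1 : countType) (r s : E1 -> V0) (V : V0 -> Prop).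
Variables (R : comNzRingType) (A : lmodType R) (mul : A -> A -> A).
Variables (p : V0 -> A) (se sse : E1 -> A).
Hypotheses (mul_nalg : is_nalg mul) (fam : leavitt_family r s mul p se sse).
Local Notation valid := (valid_path r s).
Local Notation monomial := (monomial mul p se sse).
Local Notation fam_generated := (fam_generated mul p se sse).
Local Notation mulA := (nalg_mulA mul_nalg).

Definition M_gen (a : A) : Prop := exists mu nu,
  [/\ valid mu, valid nu, V (prange mu) & a = monomial mu nu].
Definition Mstar_gen (a : A) : Prop := exists mu nu,
  [/\ valid mu, valid nu, V (prange nu) & a = monomial mu nu].
Definition MstarM_gen (a : A) : Prop :=
  exists n m, [/\ rspan Mstar_gen n, rspan M_gen m & a = mul n m].

Lemma lincomb_Mstar_mull g :
    (forall mu nu, valid mu -> valid nu ->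
       monomial_or0_r r s mul p se sse (prange nu) (mul g (monomial mu nu))) ->
  forall n, lincomb Mstar_gen n -> lincomb Mstar_gen (mul g n).
Proof.
move=> g_mon.
apply: (lincomb_linear (linear_lmul mul_nalg g)) => _ [mu [nu [mu_v nu_v Vnu ->]]].
have [->|[mu' [nu' [? ? nu'_nu ->]]]] := g_mon mu nu mu_v nu_v; first exact: lincomb0.
by apply: lincomb1; exists mu', nu'; rewrite nu'_nu.
Qed.

Lemma lincomb_M_mulr g :
    (forall mu nu, valid mu -> valid nu ->
       monomial_or0_l r s mul p se sse (prange mu) (mul (monomial mu nu) g)) ->
  forall m, lincomb M_gen m -> lincomb M_gen (mul m g).
Proof.
move=> g_mon.
apply: (lincomb_linear (linear_rmul mul_nalg g)) => _ [mu [nu [mu_v nu_v Vmu ->]]].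
have [->|[mu' [nu' [? ? mu'_mu ->]]]] := g_mon mu nu mu_v nu_v; first exact: lincomb0.
by apply: lincomb1; exists mu', nu'; rewrite mu'_mu.
Qed.

Lemma Mstar_mull g n :
  fam_generated g -> lincomb Mstar_gen n -> lincomb Mstar_gen (mul g n).
Proof.
move=> gen_g; elim: gen_g n => [v|e|e||a x y _ IHx _ IHy|x y _ IHx _ IHy] n Mn.
- by apply: lincomb_Mstar_mull Mn => *; apply: p_monomial.
- by apply: lincomb_Mstar_mull Mn => *; apply: se_monomial.
- by apply: lincomb_Mstar_mull Mn => *; apply: sse_monomial.
- by rewrite nalg_mul0l //; apply: lincomb0.
- by rewrite (linear_rmul mul_nalg); apply: lincombZD; [apply: IHx | apply: IHy].
- by rewrite -mulA; apply/IHx/IHy.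
Qed.

Lemma M_mulr g m : fam_generated g -> lincomb M_gen m -> lincomb M_gen (mul m g).
Proof.
move=> gen_g; elim: gen_g m => [v|e|e||a x y _ IHx _ IHy|x y _ IHx _ IHy] m Mm.
- by apply: lincomb_M_mulr Mm => *; apply: monomial_p.
- by apply: lincomb_M_mulr Mm => *; apply: monomial_se.
- by apply: lincomb_M_mulr Mm => *; apply: monomial_sse.
- by rewrite nalg_mul0r //; apply: lincomb0.
- by rewrite (linear_lmul mul_nalg); apply: lincombZD; [apply: IHx | apply: IHy].
- by rewrite mulA; apply/IHy/IHx.
Qed.

Lemma MstarM_mull g x :
  fam_generated g -> lincomb MstarM_gen x -> lincomb MstarM_gen (mul g x).
Proof.
move=> gen_g; apply: (lincomb_linear (linear_lmul mul_nalg g)) => _ [n [m [Mn Mm ->]]].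
apply: lincomb1; exists (mul g n), m; split; rewrite ?mulA //.
by apply/rspanP/Mstar_mull/rspanP.
Qed.

Lemma MstarM_mulr g x :
  fam_generated g -> lincomb MstarM_gen x -> lincomb MstarM_gen (mul x g).
Proof.
move=> gen_g; apply: (lincomb_linear (linear_rmul mul_nalg g)) => _ [n [m [Mn Mm ->]]].
apply: lincomb1; exists n, (mul m g); split; rewrite -?mulA //.
by apply/rspanP/M_mulr/rspanP.
Qed.

Lemma p_in_MstarM v : SigmaH r s V v -> lincomb MstarM_gen (p v).
Proof.
move/(_ (fun u => lincomb MstarM_gen (p u))).
apply=> [|u [l [l_nil l_enum]] Msucc|u Vu].
- apply: edge_closed_hereditary => e Mre.
  have -> : p (s e) = mul (sse e) (mul (p (r e)) (se e)).
    by rewrite (p_se fam) (sse_se fam) eqxx.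
  by apply: MstarM_mull; [exact: gen_sse | apply: MstarM_mulr; [exact: gen_se|]].
- rewrite (p_sum_se_sse fam l_nil l_enum); apply: lincomb_sum => e el.
  rewrite -(p_sse fam); apply: MstarM_mull; first exact: gen_se.
  by apply: MstarM_mulr; [exact: gen_sse | apply/Msucc/(proj2 l_enum)].
- have pu_mon : p u = monomial (u, [::]) (u, [::]).
    by rewrite /monomial /spath /spath_star /= (p_idem fam).
  apply: lincomb1; exists (p u), (p u); split; last by rewrite (p_idem fam).
  all: by apply/rspanP/lincomb1; exists (u, [::]), (u, [::]).
Qed.

Lemma MstarM_full : (forall w, SigmaH r s V w) ->
  forall x, fam_generated x -> lincomb MstarM_gen x.
Proof.
move=> SigmaV x; elim=> [v|e|e||a y z _ My _ Mz|y z _ My gen_z _].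
- exact: p_in_MstarM.
- by rewrite -(p_se fam); apply: MstarM_mulr; [exact: gen_se | exact: p_in_MstarM].
- by rewrite -(sse_p fam); apply: MstarM_mull; [exact: gen_sse | exact: p_in_MstarM].
- exact: lincomb0.
- exact: lincombZD.
- exact: MstarM_mulr.
Qed.

Lemma MstarM_vanishing (B : lmodType R) (mulB : B -> B -> B) (phi : A -> B) :
    is_nalg mulB -> is_nalg_hom mul mulB phi -> (forall v, V v -> phi (p v) = 0) ->
  forall x, lincomb MstarM_gen x -> phi x = 0.
Proof.
move=> mulB_nalg [phi_lin phi_mul] phi_pV.
have phi_M m : lincomb M_gen m -> phi m = 0.
  apply: (lincomb_linear_eq0 phi_lin) => _ [[u es] [nu [mu_v _ Vu ->]]].
  rewrite /monomial -(p_spath mul_nalg fam mu_v) -mulA !phi_mul phi_pV //.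
  by rewrite (nalg_mul0l mulB_nalg).
apply: (lincomb_linear_eq0 phi_lin) => _ [n [m [_ /rspanP Mm ->]]].
by rewrite phi_mul (phi_M m Mm) (nalg_mul0r mulB_nalg).
Qed.

End FullIdeal.

Section QuotientRepresentation.
Variables (V0 E1 : countType) (r s : E1 -> V0) (R : comNzRingType).
Variable H : V0 -> Prop.
Hypotheses (H_hered : hereditary r s H) (H_sat : saturated r s H).
Local Notation valid := (valid_path r s).
Local Notation path := (gpath V0 E1).

Definition exit_edge (u : V0) : option E1 :=
  if pselect (exists e, r e = u /\ ~ H (s e)) is left ex then Some (projT1 (cid ex))
  else None.

Lemma exit_edgeP u e : exit_edge u = Some e -> r e = u /\ ~ H (s e).
Proof. by rewrite /exit_edge; case: pselect => // ex [<-]; case: (cid ex). Qed.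

Lemma exit_edge_None u : exit_edge u = None -> forall e, r e = u -> H (s e).
Proof.
rewrite /exit_edge; case: pselect => // no_exit _ e re_u.
by apply: contrapT => sNH; apply: no_exit; exists e.
Qed.

(* A reduced path x codes the boundary path of the graph restricted to the
   complement of H that follows x and then takes exit edges for as long as
   there is one; x may not end with the exit edge it would be continued by, so
   codes are unique.  Prepending e and removing a first edge e are the partial
   maps push and act_se; saturation gives the Cuntz-Krieger relation, because a
   regular vertex outside H has an exit edge. *)
Definition reduced (x : path) : Prop :=
  [/\ valid x, ~ H (psource s x) &
      if x.2 is e :: es then exit_edge (r (last e es)) <> Some (last e es) else True].

Definition first_edge (x : path) : option E1 :=
  if x.2 is e :: _ then Some e else exit_edge x.1.

Definition push (e : E1) (x : path) : path :=
  if x.2 is [::] then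
    if exit_edge (r e) == Some e then (r e, [::]) else (r e, [:: e])
  else (r e, e :: x.2).

Definition act_p (v : V0) (x : path) : option path :=
  if `[< reduced x >] && (x.1 == v) then Some x else None.
Definition act_se (e : E1) (x : path) : option path :=
  if `[< reduced x >] && (first_edge x == Some e) then Some (s e, behead x.2) else None.
Definition act_sse (e : E1) (x : path) : option path :=
  if `[< reduced x >] && (s e == x.1) then Some (push e x) else None.

Lemma reduced_range x : reduced x -> ~ H x.1.
Proof. by case=> x_v srcNH _ Hx; apply/srcNH/(H_hered Hx); apply: gle_path. Qed.

Lemma first_edge_range x e : reduced x -> first_edge x = Some e -> r e = x.1.
Proof.
case: x => u [|f es] [x_v _ _] /=; first by case/exit_edgeP.
by case=> <-; move: x_v; rewrite valid_path_cons => /andP[/eqP].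
Qed.

Lemma first_edge_regular x :
  reduced x -> regular r x.1 -> exists e, first_edge x = Some e.
Proof.
case: x => u [|f es] x_red u_reg /=; last by exists f.
case eu: (exit_edge u) => [e|]; first by exists e.
by case/reduced_range: x_red; apply: H_sat u_reg (exit_edge_None eu).
Qed.

Lemma reduced_pop x e :
  reduced x -> first_edge x = Some e -> reduced (s e, behead x.2).
Proof.
case: x => u [|f es] [x_v srcNH x_end] /=; first by case/exit_edgeP.
case=> <-; move: x_v srcNH; rewrite valid_path_cons psource_cons => /andP[_ es_v] esNH.
by split=> //; case: es x_end {es_v esNH}.
Qed.

Lemma reduced_push x e : reduced x -> s e = x.1 -> reduced (push e x).
Proof.
case: x => u [|f es] [x_v srcNH x_end] /= se_u; rewrite /push /=.
  have e_v : valid (r e, [:: e]) by rewrite /valid_path /= eqxx.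
  case: eqP => [_|ne]; split=> //; rewrite /psource /= ?se_u //.
  by move=> Hre; apply/srcNH/(H_hered Hre); rewrite -se_u; apply: gle_path e_v.
by split=> //; rewrite valid_path_cons eqxx se_u.
Qed.

Lemma push_range x e : (push e x).1 = r e.
Proof. by rewrite /push; case: x.2 => [|? ?] //; case: ifP. Qed.

Lemma first_edge_push x e : first_edge (push e x) = Some e.
Proof. by rewrite /push; case: x.2 => [|f es] //; case: eqP. Qed.

Lemma pop_push x e : s e = x.1 -> (s e, behead (push e x).2) = x.
Proof. by case: x => u es /= ->; rewrite /push /=; case: es => [|f es] //; case: eqP. Qed.

Lemma push_pop x e :
  reduced x -> first_edge x = Some e -> push e (s e, behead x.2) = x.
Proof.
move=> x_red fe; have re_x := first_edge_range x_red fe.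
case: x x_red fe re_x => u [|f es] [_ _ x_end] /=.
  by rewrite /first_edge /push /= => eu ->; rewrite eu eqxx.
case=> <- <-; rewrite /push /=.
by case: es x_end => [|g gs] //= ee; case: eqP.
Qed.

Lemma act_p_act_se e x : obind (act_se e) (act_p (r e) x) = act_se e x.
Proof.
rewrite /act_p /act_se; case: (asboolP (reduced x)) => //= x_red.
case: (x.1 =P r e) => [_|xNre] /=; first by rewrite asboolT.
by case: eqP => // fe; case: xNre; rewrite (first_edge_range x_red fe).
Qed.

Lemma act_se_act_p e x : obind (act_p (s e)) (act_se e x) = act_se e x.
Proof.
rewrite /act_se; case: (asboolP (reduced x)) => //= x_red; case: eqP => //= fe.
by rewrite /act_p asboolT ?eqxx //; apply: reduced_pop fe.
Qed.

Lemma act_p_act_sse e x : obind (act_sse e) (act_p (s e) x) = act_sse e x.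
Proof.
rewrite /act_p /act_sse; case: (asboolP (reduced x)) => //= x_red.
rewrite [x.1 == s e]eq_sym; case: ifP => //= se_x.
by rewrite asboolT // se_x.
Qed.

Lemma act_sse_act_p e x : obind (act_p (r e)) (act_sse e x) = act_sse e x.
Proof.
rewrite /act_sse; case: (asboolP (reduced x)) => //= x_red; case: eqP => //= se_x.
by rewrite /act_p asboolT ?push_range ?eqxx //; apply: reduced_push.
Qed.

Lemma act_sse_act_se e f x :
  obind (act_se f) (act_sse e x) = if e == f then act_p (s e) x else None.
Proof.
rewrite /act_sse /act_p [s e == _]eq_sym.
case: (asboolP (reduced x)) => //= x_red; last by case: ifP.
case: eqP => [x_se|]; last by case: ifP.
rewrite /= /act_se asboolT ?first_edge_push; last exact: reduced_push.
by rewrite (inj_eq Some_inj); case: eqP => // <-; rewrite pop_push.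
Qed.

Lemma act_se_act_sse e x : obind (act_sse e) (act_se e x) =
  if `[< reduced x >] && (first_edge x == Some e) then Some x else None.
Proof.
rewrite /act_se; case: (asboolP (reduced x)) => //= x_red; case: eqP => //= fe.
by rewrite /act_sse asboolT ?eqxx ?push_pop //; apply: reduced_pop fe.
Qed.

Definition rep_p v : endo (path -> R^o) := pull_op R (act_p v).
Definition rep_se e : endo (path -> R^o) := pull_op R (act_se e).
Definition rep_sse e : endo (path -> R^o) := pull_op R (act_sse e).

Lemma rep_family : leavitt_family r s (@endo_comp _ _) rep_p rep_se rep_sse.
Proof.
split.
- split=> [v|v w vNw]; rewrite pull_op_comp.
    apply: eq_pull_op => x; rewrite /act_p.
    by case: ifP => //= /andP[x_red x_v]; rewrite x_red x_v.
  apply/pull_op_eq0 => x; rewrite /act_p.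
  by case: ifP => //= /andP[_ /eqP ->]; rewrite (negbTE vNw) andbF.
- by move=> e; split; rewrite pull_op_comp; apply: eq_pull_op => x;
    rewrite ?act_p_act_se ?act_se_act_p.
- by move=> e; split; rewrite pull_op_comp; apply: eq_pull_op => x;
    rewrite ?act_p_act_sse ?act_sse_act_p.
- move=> e f; rewrite pull_op_comp; case: eqP => [<-|eNf].
    by apply: eq_pull_op => x; rewrite act_sse_act_se eqxx.
  by apply/pull_op_eq0 => x; rewrite act_sse_act_se; case: eqP.
- move=> v l l_nil [l_uniq l_v].
  rewrite /rep_p -(sum_pull_op_select _ l_uniq (sel := first_edge)); last first.
    move=> x; rewrite /act_p; case: ifP => //= /andP[/asboolP x_red /eqP x_v] _.
    have [|e fe] := first_edge_regular x_red; first by rewrite x_v; exists l.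
    by exists e; rewrite // -l_v (first_edge_range x_red fe).
  apply: eq_big_seq => e el; rewrite pull_op_comp; apply: eq_pull_op => x.
  rewrite act_se_act_sse /act_p.
  case: (asboolP (reduced x)) => //= x_red; case: eqP => //= fe.
  by rewrite -(first_edge_range x_red fe) (l_v e).2 ?eqxx.
Qed.

Lemma rep_p_eq0 v : rep_p v = 0 <-> H v.
Proof.
rewrite pull_op_eq0; split=> [act0|Hv x].
  apply: contrapT => vNH; have := act0 (v, [::]).
  by rewrite /act_p asboolT ?eqxx.
rewrite /act_p; case: (asboolP (reduced x)) => //= /reduced_range xNH.
by case: eqP => // x_v; case: xNH; rewrite x_v.
Qed.

End QuotientRepresentation.

Unset Implicit Arguments.

Theorem lemma3p2 (V0 E1 : countType) (r s : E1 -> V0) (V : V0 -> Prop)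
  (R : comNzRingType) (A : lmodType R) (mul : A -> A -> A)
  (p : V0 -> A) (se sse : E1 -> A) :
  universal_leavitt r s mul p se sse ->
  let M := rspan (fun a : A => exists mu nu : gpath V0 E1,
             [/\ valid_path r s mu, valid_path r s nu, V (prange mu)
               & a = mul (spath mul p se mu) (spath_star mul p sse nu)]) in
  let Mstar := rspan (fun a : A => exists mu nu : gpath V0 E1,
             [/\ valid_path r s mu, valid_path r s nu, V (prange nu)
               & a = mul (spath mul p se mu) (spath_star mul p sse nu)]) in
  let MstarM := rspan (fun a : A => exists n m, [/\ Mstar n, M m & a = mul n m]) in
  (forall a : A, MstarM a) <-> (forall w : V0, SigmaH r s V w).
Proof.
move=> univ M Mstar MstarM; have [mul_nalg [fam univ_hom]] := univ.
split=> [full w H H_hered H_sat VH | SigmaV a].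
- have [[phi [phi_hom [phi_p _]]] _] :=
    univ_hom _ _ _ _ _ (endo_comp_nalg _) (rep_family R H_hered H_sat).
  apply/(rep_p_eq0 R H_hered); rewrite -phi_p.
  apply: (MstarM_vanishing (V := V) mul_nalg fam (endo_comp_nalg _) phi_hom).
    by move=> v Vv; rewrite phi_p; apply/(rep_p_eq0 R H_hered)/VH.
  exact/rspanP/full.
- apply/rspanP/(MstarM_full mul_nalg fam SigmaV).
  exact: (universal_leavitt_generated univ).
Qed.
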